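(* (i) $\overline{\mathcal{M}\setminus\mathbb{R}}\cap\mathbb{R}\subset\mathcal{O}$; (ii) $\overline{\mathcal{N}\setminus\mathrm{Diag}(\mathbb{R})}\cap\mathrm{Diag}(\mathbb{R})\subset\mathrm{Diag}(\mathcal{O})$.
   Context: Let $\mathcal{B}=\{1+\sum_{n=1}^\infty a_n x^n : a_n\in\{-1,0,1\}\}$ (power series converging on the open unit disk $\mathbb{D}\subset\mathbb{C}$). Define $\mathcal{M}=\{z\in\mathbb{D}: \exists f\in\mathcal{B},\ f(z)=0\}$, $\mathcal{N}=\{(\gamma,\lambda)\in(-1,1)^2: \exists f\in\mathcal{B},\ f(\gamma)=f(\lambda)=0\}$, $\mathcal{O}=\{\lambda\in(-1,1): \exists f\in\mathcal{B},\ f(\lambda)=f'(\lambda)=0\}$. For $F\subset\mathbb{R}$, $\mathrm{Diag}(F)=\{(\lambda,\lambda):\lambda\in F\}$. Overlines denote closures (relative to $\mathbb{D}$, resp. $(-1,1)^2$). *)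

From Stdlib Require Import Reals ZArith.
From Coquelicot Require Import Coquelicot.
Open Scope R_scope.

(* An element f = 1 + sum_{n>=1} a_n x^n of the class B, encoded by its
   integer coefficient sequence a (a 0 = 1, a n in {-1,0,1} for n >= 1). *)
Definition inB (a : nat -> Z) : Prop :=
  a 0%nat = 1%Z /\
  forall n : nat, (1 <= n)%nat -> a n = (-1)%Z \/ a n = 0%Z \/ a n = 1%Z.

Definition fR (a : nat -> Z) (x : R) : R := PSeries (fun n => IZR (a n)) x.

Definition zeroC (a : nat -> Z) (z : C) : Prop :=
  is_series (V := C_NormedModule) (fun n : nat => RtoC (IZR (a n)) * pow_n (K := C_Ring) z n)%C (RtoC 0).

Definition zeroR (a : nat -> Z) (x : R) : Prop :=
  is_series (fun n : nat => IZR (a n) * x ^ n) 0.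

Definition inM (z : C) : Prop :=
  Cmod z < 1 /\ exists a, inB a /\ zeroC a z.

Definition inN (g l : R) : Prop :=
  -1 < g < 1 /\ -1 < l < 1 /\ exists a, inB a /\ zeroR a g /\ zeroR a l.

Definition inO (l : R) : Prop :=
  -1 < l < 1 /\ exists a, inB a /\ zeroR a l /\ is_derive (fR a) l 0.

From Stdlib Require Import Reals ZArith Lra Lia Psatz Classical ClassicalEpsilon.
From Coquelicot Require Import Coquelicot.
Open Scope R_scope.

(* If [z = u + iv] is a zero of [f = sum a_n X^n] in B, the real and imaginary
   parts of [f(z) = 0] read [sum a_n p_n = 0 = sum a_n s_n], where
   [z^n = p_n + i v s_n]; if [g <> l] are real zeros, then
   [sum a_n l^n = 0 = sum a_n (g^n - l^n) / (g - l)].  In both cases [(p_n, s_n)]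
   solves the recursion [p' = w p + k s, s' = u s + p], whose solution for
   [(w, u, k) = (x, x, 0)] is [(x^n, n x^(n-1))], and it converges to that solution
   in the weighted norm [sup_n |.| / ((n+1)^3 rho^n)] as the zeros tend to [x].
   By compactness of [{-1,0,1}^N], a cluster point [c] of the corresponding
   coefficient sequences satisfies [sum c_n x^n = 0 = sum c_n n x^(n-1)], i.e.
   [f_c(x) = f_c'(x) = 0]. *)

Lemma inB_digit f n : inB f -> f n = (-1)%Z \/ f n = 0%Z \/ f n = 1%Z.
Proof.
  intros [f0 f_digit]. destruct n as [|n]; [now right; right|].
  apply f_digit. lia.
Qed.

Lemma inB_abs_le1 f n : inB f -> Rabs (IZR (f n)) <= 1.
Proof.
  intro Bf. destruct (inB_digit f n Bf) as [-> | [-> | ->]].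
  - rewrite Rabs_left; lra.
  - rewrite Rabs_R0. lra.
  - rewrite Rabs_R1. lra.
Qed.

Lemma Rabs_digit_mult f n y : inB f -> Rabs (IZR (f n) * y) <= Rabs y.
Proof.
  intro Bf. rewrite Rabs_mult. pose proof (inB_abs_le1 f n Bf).
  pose proof (Rabs_pos y). pose proof (Rabs_pos (IZR (f n))). nra.
Qed.

Lemma Rabs_pow_le x rho n : Rabs x <= rho -> Rabs (x ^ n) <= rho ^ n.
Proof. intro Hx. rewrite <- RPow_abs. apply pow_incr. split; [apply Rabs_pos|exact Hx]. Qed.

Section Compactness.

Variable Q : (nat -> Z) -> R -> Prop.
Hypothesis Q_mono : forall f e e', Q f e -> e <= e' -> Q f e'.
Hypothesis Q_inB : forall e, 0 < e -> exists f, inB f /\ Q f e.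

Definition extendable (N : nat) (g : nat -> Z) : Prop :=
  forall e, 0 < e -> exists f, inB f /\ (forall n, (n < N)%nat -> f n = g n) /\ Q f e.

Definition set_digit (g : nat -> Z) (N : nat) (d : Z) : nat -> Z :=
  fun n => if Nat.eqb n N then d else g n.

(* If every digit [d] failed at some tolerance [e_d], an approximant for the
   tolerance [min e_d] would contradict its own digit at [N]. *)
Lemma extendable_step N g :
  extendable N g -> exists d, extendable (S N) (set_digit g N d).
Proof.
  intro Hg. apply NNPP. intro no_digit.
  assert (fails : forall d, exists e, 0 < e /\ forall f, inB f ->
            (forall n, (n < S N)%nat -> f n = set_digit g N d n) -> ~ Q f e).
  { intro d. apply NNPP. intro H. apply no_digit. exists d. intros e He.
    apply NNPP. intro H'. apply H. exists e. split; [exact He|].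
    intros f Bf Af Qf. apply H'. now exists f. }
  destruct (fails (-1)%Z) as [e1 [He1 F1]].
  destruct (fails 0%Z) as [e2 [He2 F2]].
  destruct (fails 1%Z) as [e3 [He3 F3]].
  set (e := Rmin e1 (Rmin e2 e3)).
  assert (e_le : e <= e1 /\ e <= e2 /\ e <= e3).
  { unfold e. pose proof (Rmin_l e1 (Rmin e2 e3)). pose proof (Rmin_r e1 (Rmin e2 e3)).
    pose proof (Rmin_l e2 e3). pose proof (Rmin_r e2 e3). lra. }
  destruct (Hg e ltac:(unfold e; repeat apply Rmin_pos; assumption))
    as [f [Bf [Af Qf]]].
  assert (Af' : forall n, (n < S N)%nat -> f n = set_digit g N (f N) n).
  { intros n Hn. unfold set_digit. destruct (Nat.eqb_spec n N) as [->|]; [reflexivity|].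
    apply Af. lia. }
  destruct (inB_digit f N Bf) as [D | [D | D]]; rewrite D in Af'.
  - apply (F1 f Bf Af'), Q_mono with e; tauto.
  - apply (F2 f Bf Af'), Q_mono with e; tauto.
  - apply (F3 f Bf Af'), Q_mono with e; tauto.
Qed.

Fixpoint prefix (N : nat) : nat -> Z :=
  match N with
  | O => fun _ => 0%Z
  | S M => set_digit (prefix M) M
             (epsilon (inhabits 0%Z) (fun d => extendable (S M) (set_digit (prefix M) M d)))
  end.

Lemma prefix_extendable N : extendable N (prefix N).
Proof.
  induction N as [|N IH].
  - intros e He. destruct (Q_inB e He) as [f [Bf Qf]].
    exists f. split; [exact Bf|split; [intros n Hn; lia|exact Qf]].
  - cbn [prefix]. apply epsilon_spec. exact (extendable_step N (prefix N) IH).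
Qed.

Lemma prefix_stable N n : (n < N)%nat -> prefix N n = prefix (S n) n.
Proof.
  induction N as [|M IH]; intro Hn; [lia|].
  destruct (Nat.eq_dec n M) as [->|ne]; [reflexivity|].
  cbn [prefix]. unfold set_digit at 1. destruct (Nat.eqb_spec n M); [contradiction|].
  apply IH. lia.
Qed.

Lemma inB_cluster_point : exists c, inB c /\ forall N, extendable N c.
Proof.
  exists (fun n => prefix (S n) n).
  assert (ext : forall N, extendable N (fun n => prefix (S n) n)).
  { intros N e He. destruct (prefix_extendable N e He) as [f [Bf [Af Qf]]].
    exists f. split; [exact Bf|split; [|exact Qf]].
    intros n Hn. rewrite Af by assumption. now apply prefix_stable. }
  split; [|exact ext].
  assert (digit_of : forall n, exists f, inB f /\ f n = prefix (S n) n).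
  { intro n. destruct (ext (S n) 1 Rlt_0_1) as [f [Bf [Af _]]]. exists f. auto. }
  split.
  - destruct (digit_of 0%nat) as [f [[f0 _] E]]. congruence.
  - intros n _. destruct (digit_of n) as [f [Bf <-]]. now apply inB_digit.
Qed.

End Compactness.

Lemma CV_radius_gt_of_bounded (a : nat -> R) r :
  (forall n, Rabs (a n) <= 1) -> 0 <= r < 1 -> Rbar_lt r (CV_radius a).
Proof.
  intros Ha Hr. set (r' := (1 + r) / 2).
  assert (H : Rbar_le r' (CV_radius a)).
  { apply (proj1 (CV_radius_bounded a)). exists 1. intro n.
    rewrite Rabs_mult, <- RPow_abs, (Rabs_pos_eq r') by (unfold r'; lra).
    assert (0 <= r' ^ n <= 1).
    { split; [apply pow_le; unfold r'; lra|].
      rewrite <- (pow1 n). apply pow_incr. unfold r'; lra. }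
    pose proof (Ha n). pose proof (Rabs_pos (a n)). nra. }
  destruct (CV_radius a) as [l| |]; simpl in *; [unfold r' in H; lra|exact I|exact H].
Qed.

Definition weight (rho : R) (n : nat) : R := (INR n + 1) ^ 3 * rho ^ n.

Lemma weight_ge0 rho n : 0 <= rho -> 0 <= weight rho n.
Proof.
  intro Hr. apply Rmult_le_pos; apply pow_le; [pose proof (pos_INR n); lra|exact Hr].
Qed.

Lemma weight_le rho tau n : 0 <= rho <= tau -> weight rho n <= weight tau n.
Proof.
  intro Hr. apply Rmult_le_compat_l; [apply pow_le; pose proof (pos_INR n); lra|].
  apply pow_incr. exact Hr.
Qed.

Lemma pow_le_weight rho n : 0 <= rho -> rho ^ n <= weight rho n.
Proof.
  intro Hr. unfold weight. rewrite <- (Rmult_1_l (rho ^ n)) at 1.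
  apply Rmult_le_compat_r; [apply pow_le, Hr|].
  rewrite <- (pow1 3). apply pow_incr. pose proof (pos_INR n). lra.
Qed.

(* [(n+1)^3 <= (n+1)(n+2)(n+3)], the coefficients of the third derivative of
   the geometric series. *)
Lemma ex_series_weight tau : 0 <= tau < 1 -> ex_series (weight tau).
Proof.
  intro Ht.
  set (d3 := PS_derive (PS_derive (PS_derive (fun _ => 1)))).
  apply (ex_series_le (K := R_AbsRing) (V := R_CompleteNormedModule))
    with (fun n => Rabs (d3 n * tau ^ n)).
  - intro n. change (norm (weight tau n)) with (Rabs (weight tau n)).
    rewrite Rabs_pos_eq by (apply weight_ge0; lra).
    unfold d3, PS_derive, weight. rewrite !S_INR, Rabs_mult, (Rabs_pos_eq (tau ^ n))
      by (apply pow_le; lra).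
    apply Rmult_le_compat_r; [apply pow_le; lra|].
    pose proof (pos_INR n). rewrite Rabs_pos_eq; nra.
  - apply CV_disk_inside. unfold d3. rewrite !CV_radius_derive.
    apply CV_radius_gt_of_bounded; [intro; rewrite Rabs_R1; lra|].
    rewrite Rabs_pos_eq; lra.
Qed.

Lemma series_dominated (a b : nat -> R) K :
  ex_series b -> (forall n, Rabs (a n) <= K * b n) ->
  ex_series a /\ Rabs (Series a) <= K * Series b.
Proof.
  intros Hb Ha.
  assert (HKb : ex_series (fun n => K * b n))
    by exact (ex_series_scal_l (K := R_AbsRing) (V := R_NormedModule) K b Hb).
  assert (Habs : ex_series (fun n => Rabs (a n))).
  { apply (ex_series_le (K := R_AbsRing) (V := R_CompleteNormedModule)) with (2 := HKb).
    intro n. change (norm (Rabs (a n))) with (Rabs (Rabs (a n))).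
    rewrite Rabs_Rabsolu. apply Ha. }
  split; [now apply ex_series_Rabs|].
  eapply Rle_trans; [now apply Series_Rabs|].
  rewrite <- Series_scal_l. apply Series_le; [|exact HKb].
  intro n. split; [apply Rabs_pos|apply Ha].
Qed.

Lemma eq0_of_le_geom (V A B k : R) :
  0 <= k < 1 -> (forall N e, 0 < e -> Rabs V <= A * k ^ N + e * B) -> V = 0.
Proof.
  intros Hk H. apply NNPP. intro HV. apply Rabs_pos_lt in HV.
  pose proof (Rabs_pos A). pose proof (Rabs_pos B).
  set (M := Rabs A + Rabs B + 1).
  set (eta := Rabs V / (2 * M)).
  assert (Heta : 0 < eta) by (apply Rdiv_lt_0_compat; unfold M; lra).
  assert (HM : M * eta = Rabs V / 2) by (unfold eta, M; field; lra).
  destruct (pow_lt_1_zero k ltac:(rewrite Rabs_pos_eq; lra) eta Heta) as [N HN].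
  specialize (HN N (le_n N)). rewrite Rabs_pos_eq in HN by (apply pow_le; lra).
  specialize (H N eta Heta).
  assert (A * k ^ N <= Rabs A * eta).
  { eapply Rle_trans; [apply RRle_abs|]. rewrite Rabs_mult, (Rabs_pos_eq (k ^ N))
      by (apply pow_le; lra).
    apply Rmult_le_compat_l; lra. }
  assert (eta * B <= eta * Rabs B) by (apply Rmult_le_compat_l; [lra|apply RRle_abs]).
  unfold M in HM. nra.
Qed.

Lemma weight_tail rho tau N n : 0 <= rho <= tau -> 0 < tau -> (N <= n)%nat ->
  weight rho n <= (rho / tau) ^ N * weight tau n.
Proof.
  intros Hr Ht HNn. unfold weight.
  replace (rho ^ n) with ((rho / tau) ^ n * tau ^ n)
    by (rewrite <- Rpow_mult_distr; f_equal; field; lra).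
  assert (Hk : 0 <= rho / tau <= 1).
  { split; [apply Rdiv_le_0_compat; lra|].
    apply Rmult_le_reg_r with tau; [lra|]. field_simplify; lra. }
  assert ((rho / tau) ^ n <= (rho / tau) ^ N).
  { replace n with (N + (n - N))%nat by lia. rewrite pow_add.
    assert ((rho / tau) ^ (n - N) <= 1) by (rewrite <- (pow1 (n - N)); apply pow_incr; lra).
    pose proof (pow_le _ N (proj1 Hk)). nra. }
  replace ((INR n + 1) ^ 3 * ((rho / tau) ^ n * tau ^ n))
    with ((rho / tau) ^ n * ((INR n + 1) ^ 3 * tau ^ n)) by ring.
  apply Rmult_le_compat_r; [|assumption].
  apply Rmult_le_pos; apply pow_le; [pose proof (pos_INR n)|]; lra.
Qed.

Section DigitSeries.

Variables (rho tau C : R) (c : nat -> Z) (Y : nat -> R).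
Hypothesis rho_lt_tau : 0 <= rho < tau.
Hypothesis tau_lt1 : tau < 1.
Hypothesis c_inB : inB c.
Hypothesis Y_bound : forall n, Rabs (Y n) <= C * weight rho n.

Lemma weight_bound_const_ge0 : 0 <= C.
Proof.
  pose proof (Y_bound 0%nat) as H0. unfold weight in H0. simpl in H0.
  pose proof (Rabs_pos (Y 0%nat)). lra.
Qed.

Lemma Y_bound_tau n : Rabs (Y n) <= C * weight tau n.
Proof.
  eapply Rle_trans; [apply Y_bound|].
  apply Rmult_le_compat_l; [exact weight_bound_const_ge0|apply weight_le; lra].
Qed.

Lemma ex_series_digits_Y : ex_series (fun n => IZR (c n) * Y n).
Proof.
  apply (series_dominated _ _ C (ex_series_weight tau ltac:(lra))). intro n.
  eapply Rle_trans; [apply Rabs_digit_mult, c_inB|apply Y_bound_tau].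
Qed.

(* [c Y] splits into [(c - f) Y], which vanishes below [N] and is then
   geometrically small, plus [f (Y - Z)], of size [e], plus [f Z = 0]. *)
Lemma Rabs_series_digits_Y_le f Z N e :
  0 <= e -> inB f -> (forall n, (n < N)%nat -> f n = c n) ->
  is_series (fun n => IZR (f n) * Z n) 0 -> (forall n, Rabs (Z n - Y n) <= e * weight rho n) ->
  Rabs (Series (fun n => IZR (c n) * Y n))
  <= 2 * C * Series (weight tau) * (rho / tau) ^ N + e * Series (weight tau).
Proof.
  intros He Bf Af HZ HZY.
  assert (Hw := ex_series_weight tau ltac:(lra)).
  assert (Hk : 0 <= (rho / tau) ^ N) by (apply pow_le, Rdiv_le_0_compat; lra).
  pose proof weight_bound_const_ge0.
  destruct (series_dominated (fun n => (IZR (c n) - IZR (f n)) * Y n) (weight tau)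
              (2 * C * (rho / tau) ^ N) Hw) as [E1 B1].
  { intro n. rewrite Rabs_mult. pose proof (weight_ge0 tau n ltac:(lra)).
    destruct (Nat.lt_ge_cases n N) as [Hn|Hn].
    - rewrite Af, Rminus_diag, Rabs_R0, Rmult_0_l by exact Hn.
      apply Rmult_le_pos; [apply Rmult_le_pos|]; lra.
    - assert (Hcf : Rabs (IZR (c n) - IZR (f n)) <= 2).
      { eapply Rle_trans; [apply Rabs_triang|]. rewrite Rabs_Ropp.
        pose proof (inB_abs_le1 c n c_inB). pose proof (inB_abs_le1 f n Bf). lra. }
      assert (HYn : Rabs (Y n) <= C * ((rho / tau) ^ N * weight tau n)).
      { eapply Rle_trans; [apply Y_bound|]. apply Rmult_le_compat_l; [lra|].
        apply weight_tail; [lra|lra|exact Hn]. }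
      pose proof (Rabs_pos (Y n)). pose proof (Rabs_pos (IZR (c n) - IZR (f n))).
      nra. }
  destruct (series_dominated (fun n => IZR (f n) * (Y n - Z n)) (weight tau) e Hw)
    as [E2 B2].
  { intro n. eapply Rle_trans; [apply Rabs_digit_mult, Bf|].
    rewrite Rabs_minus_sym. eapply Rle_trans; [apply HZY|].
    apply Rmult_le_compat_l; [exact He|apply weight_le; lra]. }
  assert (Hsplit : is_series (fun n => IZR (c n) * Y n)
     (Series (fun n => (IZR (c n) - IZR (f n)) * Y n)
      + Series (fun n => IZR (f n) * (Y n - Z n)) + 0)).
  { apply is_series_ext with
      (fun n => plus (plus ((IZR (c n) - IZR (f n)) * Y n) (IZR (f n) * (Y n - Z n)))
                     (IZR (f n) * Z n)).
    { intro n. unfold plus; simpl. ring. }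
    apply (is_series_plus (K := R_AbsRing) (V := R_NormedModule)); [|exact HZ].
    apply (is_series_plus (K := R_AbsRing) (V := R_NormedModule));
      now apply Series_correct. }
  rewrite (is_series_unique _ _ Hsplit), Rplus_0_r.
  eapply Rle_trans; [apply Rabs_triang|]. lra.
Qed.

End DigitSeries.

Lemma series_vanish_at_cluster_point rho C (c : nat -> Z) (Y : nat -> R) :
  0 <= rho < 1 -> inB c -> (forall n, Rabs (Y n) <= C * weight rho n) ->
  (forall N e, 0 < e -> exists f Z, inB f /\ (forall n, (n < N)%nat -> f n = c n) /\
     is_series (fun n => IZR (f n) * Z n) 0 /\
     forall n, Rabs (Z n - Y n) <= e * weight rho n) ->
  is_series (fun n => IZR (c n) * Y n) 0.
Proof.
  intros Hr Bc HY Happrox.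
  set (tau := (1 + rho) / 2).
  assert (Ht : rho < tau < 1) by (unfold tau; lra).
  enough (Series (fun n => IZR (c n) * Y n) = 0) as <-
    by exact (Series_correct _ (ex_series_digits_Y rho tau C c Y ltac:(lra) ltac:(lra) Bc HY)).
  apply (eq0_of_le_geom _ (2 * C * Series (weight tau)) (Series (weight tau)) (rho / tau)).
  { split; [apply Rdiv_le_0_compat; lra|].
    apply Rmult_lt_reg_r with tau; [lra|]. field_simplify; lra. }
  intros N e He. destruct (Happrox N e He) as [f [Z [Bf [Af [HZ HZY]]]]].
  exact (Rabs_series_digits_Y_le rho tau C c Y ltac:(lra) ltac:(lra) Bc HY f Z N e
           ltac:(lra) Bf Af HZ HZY).
Qed.

(* [pair_seq x x 0 n = (x^n, n x^(n-1))]; for [z = u + iv],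
   [z^n = p + i v s] with [(p, s) = pair_seq u u (-v^2) n]; and
   [pair_seq l g 0 n = (l^n, (g^n - l^n) / (g - l))]. *)
Fixpoint pair_seq (w u k : R) (n : nat) : R * R :=
  match n with
  | O => (1, 0)
  | S m => (w * fst (pair_seq w u k m) + k * snd (pair_seq w u k m),
            u * snd (pair_seq w u k m) + fst (pair_seq w u k m))
  end.

Lemma pair_seq_fst_k0 w u n : fst (pair_seq w u 0 n) = w ^ n.
Proof. induction n as [|n IH]; simpl; [reflexivity|]. rewrite IH. ring. Qed.

Lemma pair_seq_snd_k0 w u n : (u - w) * snd (pair_seq w u 0 n) = u ^ n - w ^ n.
Proof.
  induction n as [|n IH]; simpl; [ring|]. rewrite pair_seq_fst_k0.
  transitivity (u * ((u - w) * snd (pair_seq w u 0 n)) + (u - w) * w ^ n); [ring|].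
  rewrite IH. ring.
Qed.

Lemma pair_seq_diag x n : pair_seq x x 0 n = (x ^ n, INR n * x ^ pred n).
Proof.
  induction n as [|n IH]; cbn [pair_seq fst snd]; [f_equal; simpl; ring|].
  rewrite IH. cbn [fst snd]. f_equal; [simpl; ring|].
  rewrite S_INR. destruct n as [|n]; [simpl; ring|].
  cbn [pred]. change (x ^ S n) with (x * x ^ n). ring.
Qed.

Lemma growth_bound rho (b e : nat -> R) :
  0 <= rho -> e 0%nat = 0 -> (forall n, b n <= b (S n)) ->
  (forall n, Rabs (e (S n)) <= rho * Rabs (e n) + b n * rho ^ n) ->
  forall n, rho * Rabs (e n) <= INR n * b n * rho ^ n.
Proof.
  intros Hr e0 Hb He. induction n as [|n IH].
  - rewrite e0, Rabs_R0. simpl. lra.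
  - rewrite S_INR. simpl.
    assert (rho * Rabs (e (S n)) <= rho * (rho * Rabs (e n)) + b n * (rho * rho ^ n))
      by (specialize (He n); nra).
    assert (rho * (rho * Rabs (e n)) <= rho * (INR n * b n * rho ^ n))
      by (apply Rmult_le_compat_l; assumption).
    assert ((INR n + 1) * b n * (rho * rho ^ n) <= (INR n + 1) * b (S n) * (rho * rho ^ n)).
    { apply Rmult_le_compat_r; [apply Rmult_le_pos, pow_le; assumption|].
      apply Rmult_le_compat_l; [pose proof (pos_INR n); lra|apply Hb]. }
    nra.
Qed.

Lemma pair_seq_snd_bound w u k rho :
  0 <= rho -> Rabs u <= rho -> (forall n, Rabs (fst (pair_seq w u k n)) <= rho ^ n) ->
  forall n, rho * Rabs (snd (pair_seq w u k n)) <= INR n * rho ^ n.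
Proof.
  intros Hr Hu Hp n.
  rewrite <- (Rmult_1_r (INR n)).
  apply (growth_bound rho (fun _ => 1) (fun n => snd (pair_seq w u k n)) Hr);
    [reflexivity|intro; lra|].
  intro m. simpl. rewrite Rmult_1_l.
  eapply Rle_trans; [apply Rabs_triang|]. rewrite Rabs_mult.
  apply Rplus_le_compat; [|apply Hp].
  apply Rmult_le_compat_r; [apply Rabs_pos|exact Hu].
Qed.

Section Perturbation.

Variables x w u k rho delta : R.
Hypothesis rho_le1 : 0 <= rho <= 1.
Hypothesis x_le : Rabs x <= rho.
Hypothesis w_le : Rabs w <= rho.
Hypothesis u_le : Rabs u <= rho.
Hypothesis w_near : Rabs (w - x) <= delta.
Hypothesis u_near : Rabs (u - x) <= delta.
Hypothesis k_small : Rabs k <= delta * rho.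
Hypothesis p_bound : forall n, Rabs (fst (pair_seq w u k n)) <= rho ^ n.

Local Notation p n := (fst (pair_seq w u k n)).
Local Notation s n := (snd (pair_seq w u k n)).
Local Notation D n := (snd (pair_seq x x 0 n)).

Lemma pair_seq_fst_error n :
  rho * Rabs (p n - x ^ n) <= INR n * (delta * (INR n + 1)) * rho ^ n.
Proof.
  assert (Hd : 0 <= delta) by (pose proof (Rabs_pos (w - x)); lra).
  apply (growth_bound rho (fun n => delta * (INR n + 1)) (fun n => p n - x ^ n));
    [lra|simpl; ring|intro m; rewrite S_INR; nra|].
  intro m. simpl.
  replace (w * p m + k * s m - x * x ^ m)
    with (w * (p m - x ^ m) + ((w - x) * x ^ m + k * s m)) by ring.
  pose proof (Rabs_triang (w * (p m - x ^ m)) ((w - x) * x ^ m + k * s m)).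
  pose proof (Rabs_triang ((w - x) * x ^ m) (k * s m)).
  rewrite !Rabs_mult in *.
  assert (Rabs w * Rabs (p m - x ^ m) <= rho * Rabs (p m - x ^ m))
    by (apply Rmult_le_compat_r; [apply Rabs_pos|exact w_le]).
  assert (Rabs (w - x) * Rabs (x ^ m) <= delta * rho ^ m).
  { apply Rmult_le_compat; [apply Rabs_pos|apply Rabs_pos|exact w_near|].
    now apply Rabs_pow_le. }
  assert (Rabs k * Rabs (s m) <= delta * (INR m * rho ^ m)).
  { pose proof (pair_seq_snd_bound w u k rho ltac:(lra) u_le p_bound m).
    pose proof (Rabs_pos (s m)). pose proof (Rabs_pos k). nra. }
  nra.
Qed.

Lemma pair_seq_snd_error n :
  rho * Rabs (rho * (s n - D n)) <= INR n * (delta * INR n * (INR n + 2)) * rho ^ n.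
Proof.
  assert (Hd : 0 <= delta) by (pose proof (Rabs_pos (w - x)); lra).
  apply (growth_bound rho (fun n => delta * INR n * (INR n + 2))
           (fun n => rho * (s n - D n))); [lra|simpl; ring| |].
  { intro m. rewrite S_INR. pose proof (pos_INR m). nra. }
  intro m. simpl. rewrite (pair_seq_fst_k0 x x m).
  replace (rho * (u * s m + p m - (x * D m + x ^ m)))
    with (u * (rho * (s m - D m)) + ((u - x) * (rho * D m) + rho * (p m - x ^ m))) by ring.
  pose proof (Rabs_triang (u * (rho * (s m - D m)))
                ((u - x) * (rho * D m) + rho * (p m - x ^ m))).
  pose proof (Rabs_triang ((u - x) * (rho * D m)) (rho * (p m - x ^ m))).
  rewrite !Rabs_mult, (Rabs_pos_eq rho) in * by lra.
  assert (Rabs u * (rho * Rabs (s m - D m)) <= rho * (rho * Rabs (s m - D m))).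
  { apply Rmult_le_compat_r; [|exact u_le].
    apply Rmult_le_pos; [lra|apply Rabs_pos]. }
  assert (Rabs (u - x) * (rho * Rabs (D m)) <= delta * (INR m * rho ^ m)).
  { apply Rmult_le_compat; [apply Rabs_pos|apply Rmult_le_pos; [lra|apply Rabs_pos]|exact u_near|].
    apply pair_seq_snd_bound; [lra|exact x_le|].
    intro j. rewrite pair_seq_fst_k0. apply Rabs_pow_le, x_le. }
  pose proof (pair_seq_fst_error m).
  nra.
Qed.

Lemma pair_seq_perturbation n :
  rho ^ 2 * Rabs (p n - x ^ n) <= delta * weight rho n /\
  rho ^ 2 * Rabs (s n - INR n * x ^ pred n) <= delta * weight rho n.
Proof.
  assert (Hd : 0 <= delta) by (pose proof (Rabs_pos (w - x)); lra).
  pose proof (pos_INR n). pose proof (pow_le rho n ltac:(lra)).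
  assert (0 <= delta * rho ^ n) by (apply Rmult_le_pos; assumption).
  unfold weight. split.
  - pose proof (pair_seq_fst_error n).
    assert (rho ^ 2 * Rabs (p n - x ^ n) <= rho * (INR n * (delta * (INR n + 1)) * rho ^ n))
      by (replace (rho ^ 2) with (rho * rho) by ring; rewrite Rmult_assoc;
          apply Rmult_le_compat_l; lra).
    assert (0 <= INR n * (INR n + 1) * (delta * rho ^ n)) by (apply Rmult_le_pos; nra).
    nra.
  - pose proof (pair_seq_snd_error n) as Hs.
    rewrite Rabs_mult, (Rabs_pos_eq rho), pair_seq_diag in Hs by lra. simpl in Hs. nra.
Qed.

End Perturbation.

Definition near_double_zero (x rho : R) (f : nat -> Z) (e : R) : Prop :=
  exists P S : nat -> R,
    is_series (fun n => IZR (f n) * P n) 0 /\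
    is_series (fun n => IZR (f n) * S n) 0 /\
    forall n, Rabs (P n - x ^ n) <= e * weight rho n /\
              Rabs (S n - INR n * x ^ pred n) <= e * weight rho n.

Lemma near_double_zero_mono x rho f e e' :
  0 <= rho -> near_double_zero x rho f e -> e <= e' -> near_double_zero x rho f e'.
Proof.
  intros Hr [P [S [HP [HS Hb]]]] He. exists P, S. split; [exact HP|split; [exact HS|]].
  intro n. destruct (Hb n) as [B1 B2].
  assert (e * weight rho n <= e' * weight rho n)
    by (apply Rmult_le_compat_r; [apply weight_ge0|]; assumption).
  split; lra.
Qed.

Lemma is_derive_fR c x : inB c -> Rabs x < 1 ->
  is_series (fun n => IZR (c n) * (INR n * x ^ pred n)) 0 -> is_derive (fR c) x 0.
Proof.
  intros Bc Hx H0.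
  assert (Hrad : Rbar_lt (Rabs x) (CV_radius (fun n => IZR (c n)))).
  { apply CV_radius_gt_of_bounded; [intro n; now apply inB_abs_le1|].
    split; [apply Rabs_pos|exact Hx]. }
  replace 0 with (PSeries (PS_derive (fun n => IZR (c n))) x);
    [exact (is_derive_PSeries _ x Hrad)|].
  apply is_series_unique.
  apply (is_series_ext (fun k => IZR (c (S k)) * (INR (S k) * x ^ pred (S k)))).
  { intro k. unfold PS_derive. simpl pred.
    rewrite <- Rmult_assoc, (Rmult_comm (IZR _)). reflexivity. }
  apply (is_series_incr_1 (K := R_AbsRing) (V := R_NormedModule)
           (fun n => IZR (c n) * (INR n * x ^ pred n))).
  match goal with |- is_series _ ?l => replace l with 0 by (unfold plus; simpl; ring) end.
  exact H0.
Qed.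

Lemma Rabs_dpow_le x rho n :
  0 <= rho -> Rabs x <= rho -> rho * Rabs (INR n * x ^ pred n) <= weight rho n.
Proof.
  intros Hr Hx.
  assert (Hs : rho * Rabs (snd (pair_seq x x 0 n)) <= INR n * rho ^ n).
  { apply pair_seq_snd_bound; [exact Hr|exact Hx|].
    intro j. rewrite pair_seq_fst_k0. now apply Rabs_pow_le. }
  rewrite pair_seq_diag in Hs. simpl snd in Hs.
  eapply Rle_trans; [exact Hs|]. unfold weight.
  apply Rmult_le_compat_r; [now apply pow_le|].
  pose proof (pos_INR n). nra.
Qed.

Lemma inO_of_near_double_zeros x rho :
  0 < rho < 1 -> Rabs x <= rho ->
  (forall e, 0 < e -> exists f, inB f /\ near_double_zero x rho f e) -> inO x.
Proof.
  intros Hr Hx Hnear.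
  destruct (inB_cluster_point (near_double_zero x rho)
              (fun f e e' => near_double_zero_mono x rho f e e' ltac:(lra)) Hnear)
    as [c [Bc Hc]].
  assert (Hpow0 : is_series (fun n => IZR (c n) * x ^ n) 0).
  { apply (series_vanish_at_cluster_point rho 1 c); [lra|exact Bc| |].
    - intro n. rewrite Rmult_1_l.
      eapply Rle_trans; [apply Rabs_pow_le, Hx|apply pow_le_weight; lra].
    - intros N e He. destruct (Hc N e He) as [f [Bf [Af [P [S [HP [_ Hb]]]]]]].
      exists f, P. split; [exact Bf|split; [exact Af|split; [exact HP|apply Hb]]]. }
  assert (Hder0 : is_series (fun n => IZR (c n) * (INR n * x ^ pred n)) 0).
  { apply (series_vanish_at_cluster_point rho (/ rho) c); [lra|exact Bc| |].
    - intro n. apply Rmult_le_reg_l with rho; [lra|].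
      rewrite <- Rmult_assoc, Rinv_r, Rmult_1_l by lra.
      apply Rabs_dpow_le; lra.
    - intros N e He. destruct (Hc N e He) as [f [Bf [Af [P [S [_ [HS Hb]]]]]]].
      exists f, S. split; [exact Bf|split; [exact Af|split; [exact HS|apply Hb]]]. }
  split; [destruct (Rabs_def2 x 1 ltac:(lra)); lra|].
  exists c. split; [exact Bc|split; [exact Hpow0|]].
  apply is_derive_fR; [exact Bc|lra|exact Hder0].
Qed.

(* The tolerance [delta / rho] of [pair_seq_perturbation] turns [|k| <= delta]
   into its hypothesis [|k| <= (delta / rho) rho]. *)
Lemma near_double_zero_of_pair_seq x rho delta f w u k :
  0 < rho <= 1 -> Rabs x + delta <= rho ->
  Rabs (w - x) <= delta -> Rabs (u - x) <= delta -> Rabs k <= delta ->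
  (forall n, Rabs (fst (pair_seq w u k n)) <= rho ^ n) ->
  is_series (fun n => IZR (f n) * fst (pair_seq w u k n)) 0 ->
  is_series (fun n => IZR (f n) * snd (pair_seq w u k n)) 0 ->
  near_double_zero x rho f (delta / rho ^ 3).
Proof.
  intros Hr Hxd Hw Hu Hk Hp HP HS.
  exists (fun n => fst (pair_seq w u k n)), (fun n => snd (pair_seq w u k n)).
  split; [exact HP|split; [exact HS|intro n]].
  pose proof (Rabs_pos x). pose proof (Rabs_pos (w - x)).
  assert (Hd : delta <= delta / rho).
  { apply Rmult_le_reg_r with rho; [lra|].
    replace (delta / rho * rho) with delta by (field; lra). nra. }
  assert (Hwu : Rabs w <= rho /\ Rabs u <= rho).
  { pose proof (Rabs_triang x (w - x)). pose proof (Rabs_triang x (u - x)).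
    replace (x + (w - x)) with w in * by ring. replace (x + (u - x)) with u in * by ring.
    lra. }
  assert (Hk' : Rabs k <= delta / rho * rho)
    by (replace (delta / rho * rho) with delta by (field; lra); exact Hk).
  assert (Hr1 : 0 <= rho <= 1) by lra.
  assert (Hxr : Rabs x <= rho) by lra.
  assert (Hw' : Rabs (w - x) <= delta / rho) by lra.
  assert (Hu' : Rabs (u - x) <= delta / rho) by lra.
  destruct (pair_seq_perturbation x w u k rho (delta / rho) Hr1 Hxr
              (proj1 Hwu) (proj2 Hwu) Hw' Hu' Hk' Hp n) as [E1 E2].
  assert (Hscale : forall t, rho ^ 2 * t <= delta / rho * weight rho n ->
                             t <= delta / rho ^ 3 * weight rho n).
  { intros t Ht. apply Rmult_le_reg_l with (rho ^ 2); [apply pow_lt; lra|].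
    replace (rho ^ 2 * (delta / rho ^ 3 * weight rho n))
      with (delta / rho * weight rho n) by (field; lra).
    exact Ht. }
  split; apply Hscale; assumption.
Qed.

Lemma inO_of_perturbed_recursions x : -1 < x < 1 ->
  (forall delta, 0 < delta -> exists f w u k, inB f /\
     Rabs (w - x) <= delta /\ Rabs (u - x) <= delta /\ Rabs k <= delta /\
     (forall n, Rabs (fst (pair_seq w u k n)) <= (Rabs x + delta) ^ n) /\
     is_series (fun n => IZR (f n) * fst (pair_seq w u k n)) 0 /\
     is_series (fun n => IZR (f n) * snd (pair_seq w u k n)) 0) ->
  inO x.
Proof.
  intros Hx Hrec.
  assert (Hax : Rabs x < 1) by (apply Rabs_def1; lra).
  set (rho := (1 + Rabs x) / 2).
  assert (Hr : Rabs x < rho < 1) by (unfold rho; lra).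
  pose proof (Rabs_pos x).
  apply (inO_of_near_double_zeros x rho); [lra|lra|].
  intros e He.
  assert (He3 : 0 < e * rho ^ 3) by (apply Rmult_lt_0_compat; [|apply pow_lt]; lra).
  set (delta := Rmin (e * rho ^ 3) ((1 - Rabs x) / 2)).
  assert (Hd : 0 < delta /\ delta <= e * rho ^ 3 /\ Rabs x + delta <= rho).
  { unfold delta. pose proof (Rmin_l (e * rho ^ 3) ((1 - Rabs x) / 2)).
    pose proof (Rmin_r (e * rho ^ 3) ((1 - Rabs x) / 2)).
    split; [apply Rmin_pos; lra|unfold rho in *; lra]. }
  destruct (Hrec delta (proj1 Hd)) as [f [w [u [k [Bf [Hw [Hu [Hk [Hp [HP HS]]]]]]]]]].
  exists f. split; [exact Bf|].
  apply near_double_zero_mono with (delta / rho ^ 3); [lra| |].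
  - apply (near_double_zero_of_pair_seq x rho delta f w u k); try (assumption || lra).
    intro n. eapply Rle_trans; [apply Hp|]. apply pow_incr. lra.
  - apply Rmult_le_reg_r with (rho ^ 3); [apply pow_lt; lra|].
    unfold Rdiv. rewrite Rmult_assoc, Rinv_l, Rmult_1_r by (apply pow_nonzero; lra). lra.
Qed.

Lemma sum_n_C (w : nat -> C) n :
  sum_n (G := C_AbelianMonoid) w n = (sum_n (fun k => fst (w k)) n, sum_n (fun k => snd (w k)) n).
Proof.
  induction n as [|n IH].
  - rewrite !sum_O. now destruct (w 0%nat).
  - rewrite !sum_Sn, IH. reflexivity.
Qed.

Lemma is_series_C_components (w : nat -> C) (l : C) :
  is_series (V := C_NormedModule) w l ->
  is_series (fun n => fst (w n)) (fst l) /\ is_series (fun n => snd (w n)) (snd l).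
Proof.
  intro H. unfold is_series in *.
  pose proof (proj1 (@filterlim_locally nat C_UniformSpace eventually _
                       (sum_n (G := C_AbelianMonoid) w) l) H) as Hball.
  split; apply filterlim_locally; intro eps;
    apply filter_imp with (2 := Hball eps); intros n [H1 H2];
    rewrite sum_n_C in H1, H2; assumption.
Qed.

Lemma pow_n_pair_seq u v n :
  pow_n (K := C_Ring) ((u, v) : C) n
  = (fst (pair_seq u u (- v ^ 2) n), v * snd (pair_seq u u (- v ^ 2) n)).
Proof.
  induction n as [|n IH].
  - simpl. unfold one; simpl. unfold RtoC. f_equal. ring.
  - change (pow_n (K := C_Ring) ((u, v) : C) (S n))
      with (mult (K := C_Ring) ((u, v) : C) (pow_n (K := C_Ring) ((u, v) : C) n)).
    rewrite IH. unfold mult; simpl. unfold Cmult; simpl. f_equal; ring.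
Qed.

Lemma nonreal_zeros_limit_in_O x : -1 < x < 1 ->
  (forall eps : R, 0 < eps -> exists z : C, inM z /\ Im z <> 0 /\ Cmod (z - RtoC x)%C < eps) ->
  inO x.
Proof.
  intros Hx Hnear. apply inO_of_perturbed_recursions; [exact Hx|]. intros delta Hd.
  destruct (Hnear (Rmin delta 1) ltac:(apply Rmin_pos; lra))
    as [[u v] [[_ [a [Ba Za]]] [Hv Hzx]]].
  simpl in Hv.
  pose proof (Rmin_l delta 1). pose proof (Rmin_r delta 1).
  pose proof (Rmax_Cmod ((u, v) - RtoC x)%C) as Hm. simpl in Hm.
  pose proof (Rmax_l (Rabs (u + - x)) (Rabs (v + - 0))).
  pose proof (Rmax_r (Rabs (u + - x)) (Rabs (v + - 0))).
  replace (v + - 0) with v in * by ring. fold (u - x) in *.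
  exists a, u, u, (- v ^ 2).
  assert (Hv2 : Rabs (- v ^ 2) <= delta).
  { rewrite Rabs_Ropp, <- RPow_abs. pose proof (Rabs_pos v). simpl. nra. }
  destruct (is_series_C_components _ _ Za) as [Zre Zim]. simpl in Zre, Zim.
  split; [exact Ba|split; [lra|split; [lra|split; [exact Hv2|split; [|split]]]]].
  - intro n.
    assert (Hz : Cmod ((u, v) : C) <= Rabs x + delta).
    { replace ((u, v) : C) with (RtoC x + ((u, v) - RtoC x))%C by ring.
      eapply Rle_trans; [apply Cmod_triangle|]. rewrite Cmod_R. lra. }
    eapply Rle_trans; [|apply pow_incr; split; [apply Cmod_ge_0|exact Hz]].
    eapply Rle_trans; [|apply (abs_pow_n (K := C_AbsRing))].
    rewrite pow_n_pair_seq. apply (re_le_Cmod (_, _)).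
  - eapply is_series_ext; [|exact Zre].
    intro n. cbv beta. rewrite pow_n_pair_seq. simpl. ring.
  - apply (is_series_scal_l (K := R_AbsRing) (V := R_NormedModule) (/ v)) in Zim.
    eapply is_series_ext; [|replace 0 with (scal (V := R_NormedModule) (/ v) 0);
                              [exact Zim|unfold scal; simpl; unfold mult; simpl; ring]].
    intro n. cbv beta. rewrite pow_n_pair_seq. unfold scal; simpl; unfold mult; simpl.
    field. exact Hv.
Qed.

Lemma distinct_zeros_limit_in_O l : -1 < l < 1 ->
  (forall eps : R, 0 < eps -> exists g la : R, inN g la /\ g <> la /\
     Rabs (g - l) < eps /\ Rabs (la - l) < eps) ->
  inO l.
Proof.
  intros Hl Hnear. apply inO_of_perturbed_recursions; [exact Hl|]. intros delta Hd.
  destruct (Hnear delta Hd) as [g [la [[_ [_ [a [Ba [Zg Zla]]]]] [Hne [Hg Hla]]]]].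
  exists a, la, g, 0.
  split; [exact Ba|split; [lra|split; [lra|split; [rewrite Rabs_R0; lra|split; [|split]]]]].
  - intro n. rewrite pair_seq_fst_k0. apply Rabs_pow_le.
    pose proof (Rabs_triang l (la - l)). replace (l + (la - l)) with la in * by ring. lra.
  - eapply is_series_ext; [|exact Zla]. intro n. cbv beta. now rewrite pair_seq_fst_k0.
  - (* [f(g) - f(la) = (g - la) sum a_n s_n] *)
    pose proof (is_series_minus (K := R_AbsRing) (V := R_NormedModule) _ _ _ _ Zg Zla) as Zdiff.
    apply (is_series_scal_l (K := R_AbsRing) (V := R_NormedModule) (/ (g - la))) in Zdiff.
    eapply is_series_ext;
      [|replace 0 with (scal (V := R_NormedModule) (/ (g - la)) (minus 0 0));
          [exact Zdiff|unfold scal, minus, plus, opp; simpl; unfold mult, plus, opp; simpl; ring]].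
    intro n. unfold scal, minus, plus, opp; simpl; unfold mult, plus, opp; simpl.
    replace (IZR (a n) * g ^ n + - (IZR (a n) * la ^ n))
      with (IZR (a n) * (g ^ n - la ^ n)) by ring.
    rewrite <- (pair_seq_snd_k0 la g n). field. lra.
Qed.

Theorem lemma2p8 :
  (* (i) closure (in D) of M \ R, intersected with R, is contained in O *)
  (forall x : R, -1 < x < 1 ->
     (forall eps : R, 0 < eps ->
        exists z : C, inM z /\ Im z <> 0 /\ Cmod (z - RtoC x)%C < eps) ->
     inO x)
  /\
  (* (ii) closure (in (-1,1)^2) of N \ Diag, intersected with Diag, is in Diag(O) *)
  (forall l : R, -1 < l < 1 ->
     (forall eps : R, 0 < eps ->
        exists g la : R, inN g la /\ g <> la /\
          Rabs (g - l) < eps /\ Rabs (la - l) < eps) ->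
     inO l).
Proof.
  split; [exact nonreal_zeros_limit_in_O|exact distinct_zeros_limit_in_O].
Qed.
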